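(* Let $\mathbb{F}$ be a field, $m,b\in\mathbb{F}$ with $m\neq0$, $m\neq1$. Consider the reduction system $\Gamma$ in $\mathbb{F}\langle A,B,C\rangle$ consisting of the pairs $\alpha=\left(AB,\frac{mC-bI}{m-1}\right)$, $\beta=(AC,mCA)$, $\gamma=\left(BA,\frac{C-bI}{m-1}\right)$, $\delta=(CB,mBC)$, and $\varepsilon(k)=\left(BC^kA,\frac{C^{k+1}-bC^k}{m^k(m-1)}\right)$ for $k=1,2,\ldots$. Then $\Gamma$ has no inclusion ambiguities and every (overlap) ambiguity of $\Gamma$ is resolvable.
   Context: A reduction system in $\mathbb{F}\langle A,B,C\rangle$ is a set $S$ of pairs $\mu=(W_\mu,f_\mu)$ with $W_\mu$ a word (element of the free monoid on $A,B,C$) and $f_\mu\in\mathbb{F}\langle A,B,C\rangle$. For words $L,R$ and $\mu\in S$, the reduction $r_{L\mu R}$ is the linear map of $\mathbb{F}\langle A,B,C\rangle$ fixing every word except $LW_\mu R$, which it sends to $Lf_\mu R$. An overlap ambiguity is a tuple $(\mu,\nu,L,X,R)$ with $\mu,\nu\in S$, $L,X,R$ nonempty words, $W_\mu=LX$, $W_\nu=XR$; it is resolvable if there are finite compositions of reductions $\lambda,\rho$ with $\lambda(f_\mu R)=\rho(Lf_\nu)$. An inclusion ambiguity is $(\mu,\nu,L,X,R)$ with $\mu\ne\nu$, $W_\mu=X$, $W_\nu=LXR$; it is resolvable if $\lambda(Lf_\mu R)=\rho(f_\nu)$ for some compositions of reductions $\lambda,\rho$. *)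

(* The free algebra F<A,B,C> is modelled as coefficient
   functions word -> F (all elements we use are finitely supported). *)
From HB Require Import structures.
From mathcomp Require Import all_boot all_algebra.
Set Implicit Arguments. Unset Strict Implicit. Unset Printing Implicit Defensive.
Import GRing.Theory.
Local Open Scope ring_scope.

Inductive letter := LA | LB | LC.

Definition letter_eqb (x y : letter) : bool :=
  match x, y with LA, LA | LB, LB | LC, LC => true | _, _ => false end.
Lemma letter_eqP : Equality.axiom letter_eqb.
Proof. by case; case; constructor. Qed.
HB.instance Definition _ := hasDecEq.Build letter letter_eqP.

Definition word := seq letter.

Section FreeAlg.
Variable F : fieldType.

Definition falg := word -> F.

Definition fa_word (w : word) : falg := fun u => (u == w)%:R.
Definition fa_add (p q : falg) : falg := fun u => p u + q u.
Definition fa_scale (c : F) (p : falg) : falg := fun u => c * p u.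
Definition fa_lmul (L : word) (p : falg) : falg :=
  fun u => if take (size L) u == L then p (drop (size L) u) else 0.
Definition fa_rmul (p : falg) (R : word) : falg :=
  fun u => if drop (size u - size R) u == R then p (take (size u - size R) u) else 0.

Record redsys := RedSys { rs_idx : Type; rs_W : rs_idx -> word; rs_f : rs_idx -> falg }.

Definition reduction (S : redsys) (L : word) (mu : rs_idx S) (R : word) (p : falg) : falg :=
  let W := L ++ rs_W mu ++ R in
  fun u => (if u == W then 0 else p u) + p W * fa_lmul L (fa_rmul (rs_f mu) R) u.

Definition reductions (S : redsys) (l : seq (word * rs_idx S * word)) (p : falg) : falg :=
  foldl (fun q t => reduction t.1.1 t.1.2 t.2 q) p l.

Definition overlap_resolvable (S : redsys) (mu nu : rs_idx S) (L R : word) : Prop :=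
  exists lam rho : seq (word * rs_idx S * word),
    reductions lam (fa_rmul (rs_f mu) R) = reductions rho (fa_lmul L (rs_f nu)).

Definition is_overlap_ambiguity (S : redsys) (mu nu : rs_idx S) (L X R : word) : Prop :=
  [/\ L != [::], X != [::], R != [::], rs_W mu = L ++ X & rs_W nu = X ++ R].

Definition is_inclusion_ambiguity (S : redsys) (mu nu : rs_idx S) (L X R : word) : Prop :=
  [/\ mu <> nu, rs_W mu = X & rs_W nu = L ++ X ++ R].

(* The system Gamma.  Eps k stands for epsilon(k.+1), k.+1 = 1, 2, ... *)
Inductive gamma_idx := Alpha | Beta | Gamma | Delta | Eps of nat.

Definition Cpow (k : nat) : word := nseq k LC.

Definition gamma_W (i : gamma_idx) : word :=
  match i with
  | Alpha => [:: LA; LB]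
  | Beta => [:: LA; LC]
  | Gamma => [:: LB; LA]
  | Delta => [:: LC; LB]
  | Eps k => LB :: Cpow k.+1 ++ [:: LA]
  end.

Definition gamma_f (m b : F) (i : gamma_idx) : falg :=
  match i with
  | Alpha => fa_scale (m - 1)^-1 (fa_add (fa_scale m (fa_word [:: LC])) (fa_scale (- b) (fa_word [::])))
  | Beta => fa_scale m (fa_word [:: LC; LA])
  | Gamma => fa_scale (m - 1)^-1 (fa_add (fa_word [:: LC]) (fa_scale (- b) (fa_word [::])))
  | Delta => fa_scale m (fa_word [:: LB; LC])
  | Eps k => fa_scale (m ^+ k.+1 * (m - 1))^-1
               (fa_add (fa_word (Cpow k.+2)) (fa_scale (- b) (fa_word (Cpow k.+1))))
  end.

Definition Gamma_sys (m b : F) : redsys := @RedSys gamma_idx gamma_W (gamma_f m b).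

End FreeAlg.

From HB Require Import structures.
From mathcomp Require Import all_boot all_algebra.
From mathcomp Require Import ring zify.
From Stdlib Require Import FunctionalExtensionality.
Set Implicit Arguments. Unset Strict Implicit. Unset Printing Implicit Defensive.
Import GRing.Theory.
Local Open Scope ring_scope.

Section WordCalculus.
Variable F : fieldType.
Implicit Types (p q : falg F) (L R v : word) (a c : F).

Lemma lmul_word L v : fa_lmul L (fa_word F v) = fa_word F (L ++ v).
Proof.
apply: functional_extensionality => u; rewrite /fa_lmul /fa_word.
case: eqP => [Lu|Lu]; last by case: eqP => // Eu; rewrite Eu take_size_cat in Lu.
congr (nat_of_bool _)%:R; apply/eqP/eqP => [<-|->]; last exact: drop_size_cat.
by rewrite -{1}Lu cat_take_drop.
Qed.

Lemma rmul_word v R : fa_rmul (fa_word F v) R = fa_word F (v ++ R).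
Proof.
apply: functional_extensionality => u; rewrite /fa_rmul /fa_word.
case: eqP => [Ru|Ru].
  congr (nat_of_bool _)%:R; apply/eqP/eqP => [<-|->]; first by rewrite -{2}Ru cat_take_drop.
  by rewrite size_cat addnK take_size_cat.
by case: eqP => // Eu; rewrite Eu size_cat addnK drop_size_cat in Ru.
Qed.

Lemma lmul_add L p q : fa_lmul L (fa_add p q) = fa_add (fa_lmul L p) (fa_lmul L q).
Proof. by apply: functional_extensionality => u; rewrite /fa_lmul /fa_add; case: ifP; rewrite ?addr0. Qed.

Lemma lmul_scale L c p : fa_lmul L (fa_scale c p) = fa_scale c (fa_lmul L p).
Proof. by apply: functional_extensionality => u; rewrite /fa_lmul /fa_scale; case: ifP; rewrite ?mulr0. Qed.

Lemma rmul_add R p q : fa_rmul (fa_add p q) R = fa_add (fa_rmul p R) (fa_rmul q R).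
Proof. by apply: functional_extensionality => u; rewrite /fa_rmul /fa_add; case: ifP; rewrite ?addr0. Qed.

Lemma rmul_scale R c p : fa_rmul (fa_scale c p) R = fa_scale c (fa_rmul p R).
Proof. by apply: functional_extensionality => u; rewrite /fa_rmul /fa_scale; case: ifP; rewrite ?mulr0. Qed.

Lemma scale1 p : fa_scale 1 p = p.
Proof. by apply: functional_extensionality => u; rewrite /fa_scale mul1r. Qed.

Lemma scale_scale a c p : fa_scale a (fa_scale c p) = fa_scale (a * c) p.
Proof. by apply: functional_extensionality => u; rewrite /fa_scale mulrA. Qed.

Section Reductions.
Variable S : redsys F.
Implicit Types (mu : rs_idx S) (l : seq (word * rs_idx S * word)).

Lemma reduction_add L mu R p q :
  reduction L mu R (fa_add p q) = fa_add (reduction L mu R p) (reduction L mu R q).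
Proof. by apply: functional_extensionality => u; rewrite /reduction /fa_add; case: ifP => _; ring. Qed.

Lemma reduction_scale L mu R c p :
  reduction L mu R (fa_scale c p) = fa_scale c (reduction L mu R p).
Proof. by apply: functional_extensionality => u; rewrite /reduction /fa_scale; case: ifP => _; ring. Qed.

Lemma reduction_word L mu R v : reduction L mu R (fa_word F v) =
  if v == L ++ rs_W mu ++ R then fa_lmul L (fa_rmul (rs_f mu) R) else fa_word F v.
Proof.
apply: functional_extensionality => u; rewrite /reduction /fa_word.
case: (v =P L ++ rs_W mu ++ R) => [->|ne_v].
  by rewrite eqxx mul1r; case: eqP; rewrite add0r.
rewrite (_ : (_ ++ _ == v) = false) ?mul0r ?addr0; last exact/eqP/nesym.
by case: eqP => // Eu; case: eqP => // Ev; case: ne_v; rewrite -Ev.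
Qed.

Lemma reductions_nil p : reductions (S:=S) [::] p = p.
Proof. by []. Qed.

Lemma reductions_cons t l p :
  reductions (t :: l) p = reductions l (reduction t.1.1 t.1.2 t.2 p).
Proof. by []. Qed.

Lemma reductions_cat l1 l2 p : reductions (l1 ++ l2) p = reductions l2 (reductions l1 p).
Proof. exact: foldl_cat. Qed.

Lemma reductions_add l p q :
  reductions l (fa_add p q) = fa_add (reductions l p) (reductions l q).
Proof. by elim: l p q => //= t l IH p q; rewrite reduction_add IH. Qed.

Lemma reductions_scale l c p : reductions l (fa_scale c p) = fa_scale c (reductions l p).
Proof. by elim: l p => //= t l IH p; rewrite reduction_scale IH. Qed.

Definition reduced_length (t : word * rs_idx S * word) : nat :=
  size (t.1.1 ++ rs_W t.1.2 ++ t.2).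

Definition reductions_in_length n l : bool := all (fun t => reduced_length t == n) l.

Definition reduces_in_length n p q : Prop :=
  exists2 l, reductions_in_length n l & reductions l p = q.

(* Reductions acting in length n do not see words of any other length; this is
   what lets independent reduction chains be concatenated. *)
Lemma reductions_other_length n l v : reductions_in_length n l -> size v != n ->
  reductions l (fa_word F v) = fa_word F v.
Proof.
elim: l => // t l IH; rewrite /reductions_in_length /= => /andP[/eqP t_n l_n] v_n.
rewrite reduction_word; case: eqP => [Ev|_]; last exact: IH.
by rewrite -t_n /reduced_length -Ev eqxx in v_n.
Qed.

Section Commutation.
Variables (mu : rs_idx S) (x y : letter) (c : F).
Hypotheses (W_mu : rs_W mu = [:: x; y]) (f_mu : rs_f mu = fa_scale c (fa_word F [:: y; x])).

Lemma commute_step L R :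
  reduction L mu R (fa_word F (L ++ x :: y :: R)) = fa_scale c (fa_word F (L ++ y :: x :: R)).
Proof. by rewrite reduction_word W_mu eqxx f_mu rmul_scale lmul_scale rmul_word lmul_word. Qed.

Lemma commute_length L R : reduced_length (L, mu, R) = (size L + size R).+2.
Proof. by rewrite /reduced_length W_mu size_cat /= addnS addnS. Qed.

Lemma push_right j L R :
  reduces_in_length (size L + j + size R).+1 (fa_word F (L ++ x :: nseq j y ++ R))
    (fa_scale (c ^+ j) (fa_word F (L ++ nseq j y ++ x :: R))).
Proof.
elim: j L => [|j IH] L; first by exists [::]; rewrite // scale1.
have [l l_len red_l] := IH (rcons L y).
exists ((L, mu, nseq j y ++ R) :: l).
  rewrite /reductions_in_length /= -/(reductions_in_length _ l) commute_length size_cat size_nseq.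
  by rewrite size_rcons addSnnS in l_len; rewrite l_len andbT; apply/eqP; lia.
rewrite !cat_rcons in red_l.
by rewrite reductions_cons /= commute_step reductions_scale red_l scale_scale -exprS.
Qed.

Lemma push_left j L R :
  reduces_in_length (size L + j + size R).+1 (fa_word F (L ++ nseq j x ++ y :: R))
    (fa_scale (c ^+ j) (fa_word F (L ++ y :: nseq j x ++ R))).
Proof.
elim: j L => [|j IH] L; first by exists [::]; rewrite // scale1.
have [l l_len red_l] := IH (rcons L x).
exists (rcons l (L, mu, nseq j x ++ R)).
  rewrite /reductions_in_length all_rcons -/(reductions_in_length _ l) commute_length.
  by rewrite size_rcons addSnnS in l_len; rewrite l_len size_cat size_nseq andbT; apply/eqP; lia.
rewrite !cat_rcons in red_l.
by rewrite -cats1 reductions_cat red_l /= reduction_scale commute_step scale_scale -exprSr.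
Qed.

End Commutation.
End Reductions.
End WordCalculus.


Lemma CpowS n : Cpow n.+1 = LC :: Cpow n.
Proof. by []. Qed.

Lemma Cpow_cons n s : Cpow n ++ LC :: s = LC :: Cpow n ++ s.
Proof. by elim: n => // n IH; rewrite CpowS /= IH. Qed.

Lemma size_Cpow n : size (Cpow n) = n.
Proof. exact: size_nseq. Qed.

Section GammaWords.
Variables (F : fieldType) (m b : F).
Notation S := (Gamma_sys m b).
Implicit Types (i : gamma_idx).

Definition W_front i : word :=
  match i with Alpha | Beta => [:: LA] | Gamma => [:: LB] | Delta => [:: LC] | Eps k => LB :: Cpow k.+1 end.
Definition W_last i : letter :=
  match i with Alpha | Delta => LB | Beta => LC | Gamma | Eps _ => LA end.
Definition W_head i : letter :=
  match i with Alpha | Beta => LA | Gamma | Eps _ => LB | Delta => LC end.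
Definition W_tail i : word :=
  match i with Alpha | Delta => [:: LB] | Beta => [:: LC] | Gamma => [:: LA] | Eps k => Cpow k.+1 ++ [:: LA] end.

Lemma W_rcons i : gamma_W i = rcons (W_front i) (W_last i).
Proof. by case: i => //= k; rewrite -cats1. Qed.

Lemma W_cons i : gamma_W i = W_head i :: W_tail i.
Proof. by case: i. Qed.

Lemma W_inj : injective gamma_W.
Proof.
case=> [| | | |k] [| | | |j] //= [] /(congr1 size).
by rewrite !size_cat !size_nseq => /addIn [->].
Qed.

Lemma size_W i : (2 <= size (gamma_W i))%N.
Proof. by case: i => //= k; rewrite size_cat. Qed.

Lemma long_word i : (2 < size (gamma_W i))%N -> exists k, i = Eps k.
Proof. by case: i => // k; exists k. Qed.

Lemma B_not_inside k : LB \notin Cpow k ++ [:: LA].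
Proof. by rewrite mem_cat mem_nseq andbF. Qed.

Lemma A_not_inside k : LA \notin LB :: Cpow k.
Proof. by rewrite inE mem_nseq andbF. Qed.

(* Every overlap ambiguity of Gamma overlaps in a single letter: a longer
   overlap would be a proper suffix and a proper prefix of words BC^{k+1}A,
   so it would start with B, which occurs only at the front. *)
Lemma overlap_one_letter (mu nu : gamma_idx) L X R : is_overlap_ambiguity (S:=S) mu nu L X R ->
  [/\ L = W_front mu, X = [:: W_last mu], W_last mu = W_head nu & R = W_tail nu].
Proof.
case=> nL nX nR /= Wmu Wnu.
case: X nX Wmu Wnu => // x [|y X'] _ Wmu Wnu.
  rewrite W_rcons cats1 in Wmu; rewrite W_cons in Wnu.
  by case/rcons_inj: Wmu => -> ->; case: Wnu => -> ->.
have [j nu_j] : exists j, nu = Eps j.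
  by apply: long_word; rewrite Wnu size_cat /= !ltnS addn_gt0 !lt0n !size_eq0 nR orbT.
have [k mu_k] : exists k, mu = Eps k.
  by apply: long_word; rewrite Wmu size_cat /= !addnS !ltnS addn_gt0 !lt0n !size_eq0 nL.
move: Wmu Wnu; rewrite mu_k nu_j /= => Wmu [x_B _]; case: L nL Wmu => // l L _ [_ Wk].
by have := B_not_inside k.+1; rewrite CpowS cat_cons Wk -x_B mem_cat inE eqxx orbT.
Qed.

Lemma infix_of_short (L s R t : word) :
  t = L ++ s ++ R -> (size t <= size s)%N -> L = [::] /\ R = [::].
Proof.
move=> ->; rewrite !size_cat addnCA -{2}[size s]addn0 leq_add2l leqn0 addn_eq0.
by case/andP=> /nilP -> /nilP ->.
Qed.

Lemma infix_at_front (x : letter) (L s R t : word) :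
  x :: t = L ++ s ++ R -> x \notin t -> x \in s -> L = [::].
Proof. by case: L => // y L [_ ->]; rewrite !mem_cat => /negP + x_s; rewrite x_s orbT. Qed.

Lemma infix_at_back (x : letter) (L s R t : word) :
  rcons t x = L ++ s ++ R -> x \notin t -> x \in s -> R = [::].
Proof.
case/lastP: R => // R y; rewrite catA -rcons_cat => /rcons_inj [-> _].
by rewrite !mem_cat => /negP + x_s; rewrite x_s orbT.
Qed.

(* No leading word of Gamma is a factor of another one: the two-letter words
   have no proper factors of length two, and a factor W_mu of BC^{j+1}A
   containing B (resp. A) is a prefix (resp. suffix) of it. *)
Lemma no_inclusion (mu nu : gamma_idx) L X R : ~ is_inclusion_ambiguity (S:=S) mu nu L X R.
Proof.
case=> mu_nu /= <- Wnu; apply: mu_nu; apply: W_inj.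
suff [L0 R0] : L = [::] /\ R = [::] by rewrite Wnu L0 R0 cats0.
case: nu Wnu => [| | | |j] Wnu; try by apply: infix_of_short Wnu _; apply: size_W.
have L0 : LB \in gamma_W mu -> L = [::] := infix_at_front Wnu (B_not_inside _).
have R0 : LA \in gamma_W mu -> R = [::].
  by apply: (infix_at_back (L := L) _ (A_not_inside j.+1)); rewrite -Wnu /= -cats1.
case: mu L0 R0 Wnu => [| | | |k] L0 R0 Wnu;
  try by rewrite L0 ?R0 // ?inE ?mem_cat ?mem_nseq ?eqxx ?orbT.
- by move: Wnu; rewrite R0 // cats0 => /(congr1 (last LA)); rewrite /= !last_cat.
- by move: Wnu; rewrite L0.
Qed.

End GammaWords.

Section GammaResolution.
Variables (F : fieldType) (m b : F).
Hypotheses (m_neq0 : m != 0) (m_neq1 : m != 1).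
Notation S := (Gamma_sys m b).

Lemma m1_neq0 : m - 1 != 0.
Proof. by rewrite subr_eq0. Qed.

Ltac expand_reductions :=
  repeat progress rewrite ?rmul_add ?rmul_scale ?rmul_word ?lmul_add ?lmul_scale ?lmul_word
    ?reductions_cons ?reductions_nil ?reduction_add ?reduction_scale ?reduction_word /=
    ?cats0 ?CpowS ?Cpow_cons ?eqxx.

Ltac compare_coefficients :=
  apply: functional_extensionality => u; rewrite /fa_add /fa_scale /fa_word ?exprS;
  field; by rewrite ?mulf_neq0 ?expf_neq0 ?m1_neq0.

(* ABA:  (mCA - bA)/(m-1)  and  A(C - b)/(m-1), where AC -> mCA by beta. *)
Lemma resolve_AB_A : overlap_resolvable (S:=S) Alpha Gamma [:: LA] [:: LA].
Proof. by exists [::], [:: ([::], Beta, [::])]; expand_reductions. Qed.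

(* BAB:  (CB - bB)/(m-1) -> (mBC - bB)/(m-1) by delta, which is B f_alpha. *)
Lemma resolve_BA_B : overlap_resolvable (S:=S) Gamma Alpha [:: LB] [:: LB].
Proof. exists [:: ([::], Delta, [::])], [::]; expand_reductions; compare_coefficients. Qed.

(* BAC:  (C^2 - bC)/(m-1)  and  mBCA -> (C^2 - bC)/(m-1) by epsilon(1). *)
Lemma resolve_BA_C : overlap_resolvable (S:=S) Gamma Beta [:: LB] [:: LC].
Proof. exists [::], [:: ([::], Eps 0, [::])]; expand_reductions; compare_coefficients. Qed.

(* CBA:  mBCA -> (C^2 - bC)/(m-1) by epsilon(1), which is C f_gamma. *)
Lemma resolve_CB_A : overlap_resolvable (S:=S) Delta Gamma [:: LC] [:: LA].
Proof. exists [:: ([::], Eps 0, [::])], [::]; expand_reductions; compare_coefficients. Qed.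

(* ACB:  mCAB and mABC both reduce by alpha to m(mC^2 - bC)/(m-1). *)
Lemma resolve_AC_B : overlap_resolvable (S:=S) Beta Delta [:: LA] [:: LB].
Proof.
exists [:: ([:: LC], Alpha, [::])], [:: ([::], Alpha, [:: LC])].
by expand_reductions; compare_coefficients.
Qed.

(* CBC^{k+1}A:  mBC^{k+2}A -> epsilon(k+2), which is C f_epsilon(k+1). *)
Lemma resolve_CB_Eps k : overlap_resolvable (S:=S) Delta (Eps k) [:: LC] (Cpow k.+1 ++ [:: LA]).
Proof. exists [:: ([::], Eps k.+1, [::])], [::]; expand_reductions; compare_coefficients. Qed.

(* BC^{k+1}AC:  BC^{k+1} mCA -> epsilon(k+2), which is f_epsilon(k+1) C. *)
Lemma resolve_Eps_C k : overlap_resolvable (S:=S) (Eps k) Beta (LB :: Cpow k.+1) [:: LC].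
Proof. exists [::], [:: ([::], Eps k.+1, [::])]; expand_reductions; compare_coefficients. Qed.

Lemma A_past_C j :
  reduces_in_length S j.+1 (fa_word F (LA :: Cpow j)) (fa_scale (m ^+ j) (fa_word F (Cpow j ++ [:: LA]))).
Proof. by have := push_right (S:=S) (mu:=Beta) (erefl _) (erefl _) j [::] [::]; rewrite /= !cats0 addn0. Qed.

Lemma B_past_C j :
  reduces_in_length S j.+1 (fa_word F (Cpow j ++ [:: LB])) (fa_scale (m ^+ j) (fa_word F (LB :: Cpow j))).
Proof. by have := push_left (S:=S) (mu:=Delta) (erefl _) (erefl _) j [::] [::]; rewrite /= !cats0 addn0. Qed.

Ltac size_differs := rewrite /= ?size_cat size_Cpow /=; apply/eqP; lia.

(* ABC^{k+1}A:  A f_epsilon(k+1) = (AC^{k+2} - bAC^{k+1})/(m^{k+1}(m-1)); moving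
   A across the C's in both terms (independent chains, as the lengths differ)
   yields f_alpha C^{k+1}A = (mC^{k+2}A - bC^{k+1}A)/(m-1). *)
Lemma resolve_AB_Eps k : overlap_resolvable (S:=S) Alpha (Eps k) [:: LA] (Cpow k.+1 ++ [:: LA]).
Proof.
have [l2 l2_len red_l2] := A_past_C k.+2.
have [l1 l1_len red_l1] := A_past_C k.+1.
exists [::], (l2 ++ l1).
rewrite reductions_nil reductions_cat /= lmul_scale lmul_add lmul_scale !lmul_word.
rewrite !reductions_scale !reductions_add !reductions_scale red_l2.
rewrite (reductions_other_length l2_len); last by size_differs.
rewrite red_l1 reductions_scale (reductions_other_length l1_len); last by size_differs.
by expand_reductions; compare_coefficients.
Qed.

(* BC^{k+1}AB:  symmetric to the previous case, moving B across the C's. *)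
Lemma resolve_Eps_B k : overlap_resolvable (S:=S) (Eps k) Alpha (LB :: Cpow k.+1) [:: LB].
Proof.
have [l2 l2_len red_l2] := B_past_C k.+2.
have [l1 l1_len red_l1] := B_past_C k.+1.
exists (l2 ++ l1), [::].
rewrite reductions_nil reductions_cat /= rmul_scale rmul_add rmul_scale !rmul_word.
rewrite !reductions_scale !reductions_add !reductions_scale red_l2.
rewrite (reductions_other_length l2_len); last by size_differs.
rewrite red_l1 reductions_scale (reductions_other_length l1_len); last by size_differs.
by expand_reductions; compare_coefficients.
Qed.

Lemma one_letter_overlap_resolvable (mu nu : gamma_idx) : W_last mu = W_head nu ->
  overlap_resolvable (S:=S) mu nu (W_front mu) (W_tail nu).
Proof.
case: mu => [| | | |k]; case: nu => [| | | |j] //= _.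
- exact: resolve_AB_A.
- exact: resolve_AB_Eps.
- exact: resolve_AC_B.
- exact: resolve_BA_B.
- exact: resolve_BA_C.
- exact: resolve_CB_A.
- exact: resolve_CB_Eps.
- exact: resolve_Eps_B.
- exact: resolve_Eps_C.
Qed.

End GammaResolution.

Theorem lemma3p2 (F : fieldType) (m b : F) (hm0 : m != 0) (hm1 : m != 1) :
  (forall (mu nu : gamma_idx) (L X R : word),
      ~ @is_inclusion_ambiguity F (Gamma_sys m b) mu nu L X R) /\
  (forall (mu nu : gamma_idx) (L X R : word),
      @is_overlap_ambiguity F (Gamma_sys m b) mu nu L X R ->
      @overlap_resolvable F (Gamma_sys m b) mu nu L R).
Proof.
split; first exact: no_inclusion.
move=> mu nu L X R /overlap_one_letter [-> _ last_head ->].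
exact: one_letter_overlap_resolvable.
Qed.
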